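(* There exists a constant $C>0$ such that for all $j\in\mathbb Z^2$ with $|j|\ge2$, $$\sum_{k,l\in\mathbb Z^2_0}|\langle H_{e_j},\tilde e_k\otimes\tilde e_l\rangle|^2\le C|j|^2\log|j|.$$
   Context: - $\mathbb T^2=\mathbb R^2/\mathbb Z^2$ and $\mathbb Z^2_0=\mathbb Z^2\setminus\{0\}$. - $\mathbb Z^2_+=\{k:k_1>0\text{ or }(k_1=0,k_2>0)\}$ and $\mathbb Z^2_-=-\mathbb Z^2_+$. - $e_k=\sqrt2\cos(2\pi k\cdot x)$ for $k\in\mathbb Z^2_+$, and $e_k=\sqrt2\sin(2\pi k\cdot x)$ for $k\in\mathbb Z^2_-$. - $\tilde e_k(x)=e^{2\pi ik\cdot x}$ and $k^\perp=(k_2,-k_1)$. - $K(x)=-2\pi\sum_{k\in\mathbb Z^2_0}\frac{k^\perp}{|k|^2}\sin(2\pi k\cdot x)$. - $H_\phi(x,y)=\tfrac12K(x-y)\cdot(\nabla\phi(x)-\nabla\phi(y))$. - $\langle H,\tilde e_k\otimes\tilde e_l\rangle=\int_{(\mathbb T^2)^2}H(x,y)\tilde e_k(x)\tilde e_l(y)\,dx\,dy$. *)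

From Stdlib Require Import Reals ZArith List.
Open Scope R_scope.

Definition C := (R * R)%type.
Definition C0 : C := (0, 0).
Definition RtoC (r : R) : C := (r, 0).
Definition Ci : C := (0, 1).
Definition Cadd (z w : C) : C := (fst z + fst w, snd z + snd w).
Definition Copp (z : C) : C := (- fst z, - snd z).
Definition Csub (z w : C) : C := Cadd z (Copp w).
Definition Cmul (z w : C) : C :=
  (fst z * fst w - snd z * snd w, fst z * snd w + snd z * fst w).
Definition Cnorm2 (z : C) : R := fst z ^ 2 + snd z ^ 2.

(** complex 2-vectors, with the bilinear (non-conjugated) dot product *)
Definition CV := (C * C)%type.
Definition CV0 : CV := (C0, C0).
Definition CVsub (u v : CV) : CV := (Csub (fst u) (fst v), Csub (snd u) (snd v)).
Definition CVscale (z : C) (u : CV) : CV := (Cmul z (fst u), Cmul z (snd u)).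
Definition Cdot (u v : CV) : C := Cadd (Cmul (fst u) (fst v)) (Cmul (snd u) (snd v)).

Definition Z2 := (Z * Z)%type.
Definition Z2zero : Z2 := (0%Z, 0%Z).
Definition Z2eqb (k l : Z2) : bool := (Z.eqb (fst k) (fst l) && Z.eqb (snd k) (snd l))%bool.
Definition Z2add (k l : Z2) : Z2 := (fst k + fst l, snd k + snd l)%Z.
Definition Z2opp (k : Z2) : Z2 := (- fst k, - snd k)%Z.
Definition Z2sub (k l : Z2) : Z2 := Z2add k (Z2opp l).
Definition Z2norm2 (k : Z2) : R := IZR (fst k) ^ 2 + IZR (snd k) ^ 2.
Definition Z2norm (k : Z2) : R := sqrt (Z2norm2 k).
Definition Z2plusb (k : Z2) : bool :=
  (Z.ltb 0 (fst k) || (Z.eqb (fst k) 0 && Z.ltb 0 (snd k)))%bool.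
Definition Z2minusb (k : Z2) : bool := Z2plusb (Z2opp k).

(** * Functions on T^2 represented on the Fourier side.
    A trigonometric polynomial on T^2 is a finite list of pairs (a, c)
    standing for  sum c * ẽ_a(x),  ẽ_a(x) = exp(2 pi i a.x). *)
Definition tpoly := list (Z2 * C).
Definition tpolyV := list (Z2 * CV).

(* e_k = sqrt2 cos(2 pi k.x) = (sqrt2/2)(ẽ_k + ẽ_{-k})        for k in Z^2_+,
   e_k = sqrt2 sin(2 pi k.x) = (sqrt2/(2i))(ẽ_k - ẽ_{-k})     for k in Z^2_-.
   (e_0 is not defined in the paper; it is set to 0 here and never used.) *)
Definition e_fun (k : Z2) : tpoly :=
  if Z2plusb k then
    ((k, RtoC (sqrt 2 / 2)) :: (Z2opp k, RtoC (sqrt 2 / 2)) :: nil)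
  else if Z2minusb k then
    ((k, (0, - (sqrt 2 / 2))) :: (Z2opp k, (0, sqrt 2 / 2)) :: nil)
  else nil.

(* gradient: grad ẽ_a = 2 pi i a ẽ_a *)
Definition grad (P : tpoly) : tpolyV :=
  map (fun ac : Z2 * C =>
         let a := fst ac in let c := snd ac in
         (a, CVscale (Cmul (Cmul (RtoC (2 * PI)) Ci) c)
                     (RtoC (IZR (fst a)), RtoC (IZR (snd a))))) P.

(** * The Biot–Savart kernel
    K(x) = sum_{m <> 0} v_m sin(2 pi m.x),  v_m = -2 pi m^perp / |m|^2,
    with m^perp = (m2, -m1).  Its (distributional) Fourier coefficients are
    obtained from sin(2 pi m.x) = (ẽ_m - ẽ_{-m})/(2i). *)
Definition Kv (m : Z2) : CV :=
  if Z2eqb m Z2zero then CV0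
  else (RtoC (- 2 * PI * IZR (snd m) / Z2norm2 m),
        RtoC (- 2 * PI * (- IZR (fst m)) / Z2norm2 m)).
(* 1/(2i) = -i/2 *)
Definition Khat (p : Z2) : CV := CVscale (0, - (1/2)) (CVsub (Kv p) (Kv (Z2opp p))).

(** * Functions on T^2 x T^2 via Fourier coefficients:
    F p q = coefficient of ẽ_p(x) ẽ_q(y). *)
Definition series2V := Z2 -> Z2 -> CV.
Definition series2 := Z2 -> Z2 -> C.
Definition tpoly2V := list ((Z2 * Z2) * CV).

(* (x,y) |-> K(x - y) = sum_m K̂(m) ẽ_m(x) ẽ_{-m}(y) *)
Definition K_diff : series2V :=
  fun p q => if Z2eqb q (Z2opp p) then Khat p else CV0.

Definition lift_x (G : tpolyV) : tpoly2V :=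
  map (fun ac : Z2 * CV => ((fst ac, Z2zero), snd ac)) G.
Definition lift_y (G : tpolyV) : tpoly2V :=
  map (fun ac : Z2 * CV => ((Z2zero, fst ac), snd ac)) G.

(* Fourier coefficients of the pointwise dot product F(x,y) . G(x,y),
   G a trigonometric polynomial (Cauchy product, finite sum). *)
Definition dot_mul (F : series2V) (G : tpoly2V) : series2 :=
  fun p q =>
    fold_right (fun abc acc =>
      Cadd (Cdot (F (Z2sub p (fst (fst abc))) (Z2sub q (snd (fst abc)))) (snd abc)) acc)
      C0 G.

(* H_phi(x,y) = 1/2 K(x-y) . (grad phi(x) - grad phi(y)) *)
Definition H_fun (phi : tpoly) : series2 :=
  fun p q => Cmul (RtoC (1/2))
    (Csub (dot_mul K_diff (lift_x (grad phi)) p q)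
          (dot_mul K_diff (lift_y (grad phi)) p q)).

(* <H, ẽ_k ⊗ ẽ_l> = ∫∫ H(x,y) ẽ_k(x) ẽ_l(y) dx dy = Ĥ(-k,-l) *)
Definition pairing (H : series2) (k l : Z2) : C := H (Z2opp k) (Z2opp l).

Definition partial_sum (H : series2) (S : list (Z2 * Z2)) : R :=
  fold_right (fun kl acc => Cnorm2 (pairing H (fst kl) (snd kl)) + acc) 0 S.

From Pilot Require Import Defs.
From Stdlib Require Import Reals ZArith List Lra Lia.
Open Scope R_scope.

(* Since K(x - y) only couples the modes p and q = -p, the coefficient of H_phi at
   (ẽ_k, ẽ_l) only sees the mode -(k + l) of phi: it is sigma(k,l) phî(-(k + l)) with
   the real symbol sigma(k,l) = 2 pi^2 (k ^ l) (|l|^-2 - |k|^-2).  For phi = e_j only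
   the two lines k + l = -j, j contribute.  Writing s = k + l, Lagrange's identity
   (k ^ l)^2 <= |k|^2 |s|^2 gives sigma^2 <~ |s|^2 (|k|^-2 + |l|^-2), and
   sigma^2 <~ |s|^4 / |k|^4 once |k| >= 4 |s|.  With n the sup-norm of j this is
   <~ min (n^2 / t^2, n^4 / t^4) in terms of the sup-norms t of k and l, and summing
   over the shells of 8 t lattice points gives
   n^2 sum_{t <= n} 1/t + n^4 sum_{t > n} 1/t^3 <~ n^2 log n. *)

Ltac Z2_solve :=
  repeat match goal with p : Z2 |- _ => destruct p end;
  unfold Z2sub, Z2add, Z2opp, Z2zero in *; cbn [fst snd] in *;
  repeat match goal with H : (_, _) = (_, _) |- _ => injection H; clear H; intros end;
  f_equal; lia.

Lemma Z2eqb_spec k l : reflect (k = l) (Z2eqb k l).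
Proof.
  destruct k as [k1 k2], l as [l1 l2]; unfold Z2eqb; cbn [fst snd].
  destruct (Z.eqb_spec k1 l1), (Z.eqb_spec k2 l2); constructor; congruence.
Qed.

Lemma Z2opp_neq0 k : k <> Z2zero -> Z2opp k <> Z2zero.
Proof. intros Hk E; apply Hk; Z2_solve. Qed.

Lemma Z2norm2_opp k : Z2norm2 (Z2opp k) = Z2norm2 k.
Proof. destruct k; unfold Z2norm2, Z2opp; cbn [fst snd]; rewrite !opp_IZR; ring. Qed.

Lemma Z2norm2_ge0 k : 0 <= Z2norm2 k.
Proof.
  unfold Z2norm2; pose proof (pow2_ge_0 (IZR (fst k))); pose proof (pow2_ge_0 (IZR (snd k))).
  lra.
Qed.

Lemma Z2norm2_pos k : k <> Z2zero -> 0 < Z2norm2 k.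
Proof.
  destruct k as [k1 k2]; unfold Z2norm2, Z2zero; cbn [fst snd]; intros Hk.
  destruct (Z.eq_dec k1 0) as [->|H1].
  - assert (IZR k2 <> 0) by (apply not_0_IZR; congruence). simpl; nra.
  - assert (IZR k1 <> 0) by (apply not_0_IZR; auto). simpl; nra.
Qed.

(* [C] alone denotes Stdlib's binomial coefficient here. *)
Lemma C_ext (z w : Defs.C) : fst z = fst w -> snd z = snd w -> z = w.
Proof. destruct z, w; cbn; congruence. Qed.

Ltac C_solve :=
  apply C_ext; unfold Cdot, CVscale, Csub, Copp, Cadd, Cmul, CV0, C0, RtoC, Ci; cbn [fst snd].

Lemma Cadd_C0_l z : Cadd C0 z = z.
Proof. C_solve; ring. Qed.

Lemma Cmul_Cadd_r z u v : Cmul z (Cadd u v) = Cadd (Cmul z u) (Cmul z v).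
Proof. C_solve; ring. Qed.

Lemma Cmul_Csub_Cadd h x a y b :
  Cmul h (Csub (Cadd x a) (Cadd y b)) = Cadd (Cmul h (Csub x y)) (Cmul h (Csub a b)).
Proof. C_solve; ring. Qed.

Lemma Cnorm2_scale r z : Cnorm2 (Cmul (RtoC r) z) = r ^ 2 * Cnorm2 z.
Proof. unfold Cnorm2, Cmul, RtoC; cbn [fst snd]; ring. Qed.

(** * The Fourier coefficients of H_phi *)

Lemma K_diff_shift_x p q a :
  K_diff (Z2sub p a) (Z2sub q Z2zero) = if Z2eqb a (Z2add p q) then Khat (Z2opp q) else CV0.
Proof.
  unfold K_diff.
  destruct (Z2eqb_spec (Z2sub q Z2zero) (Z2opp (Z2sub p a))) as [E|E],
           (Z2eqb_spec a (Z2add p q)) as [E'|E'].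
  - f_equal; Z2_solve.
  - exfalso; apply E'; Z2_solve.
  - exfalso; apply E; Z2_solve.
  - reflexivity.
Qed.

Lemma K_diff_shift_y p q a :
  K_diff (Z2sub p Z2zero) (Z2sub q a) = if Z2eqb a (Z2add p q) then Khat p else CV0.
Proof.
  unfold K_diff.
  destruct (Z2eqb_spec (Z2sub q a) (Z2opp (Z2sub p Z2zero))) as [E|E],
           (Z2eqb_spec a (Z2add p q)) as [E'|E'].
  - f_equal; Z2_solve.
  - exfalso; apply E'; Z2_solve.
  - exfalso; apply E; Z2_solve.
  - reflexivity.
Qed.

Lemma Khat_val m : m <> Z2zero ->
  Khat m = ((0, 2 * PI * IZR (snd m) / Z2norm2 m), (0, - (2 * PI * IZR (fst m) / Z2norm2 m))).
Proof.
  intros Hm. pose proof (Z2norm2_pos m Hm).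
  unfold Khat, Kv.
  destruct (Z2eqb_spec m Z2zero) as [E|_]; [contradiction|].
  destruct (Z2eqb_spec (Z2opp m) Z2zero) as [E|_]; [exfalso; exact (Z2opp_neq0 m Hm E)|].
  rewrite Z2norm2_opp. unfold Z2opp; cbn [fst snd]; rewrite !opp_IZR.
  unfold CVscale, CVsub; f_equal; C_solve; field; lra.
Qed.

Definition grad_mode (a : Z2) (c : Defs.C) : CV :=
  CVscale (Cmul (Cmul (RtoC (2 * PI)) Ci) c) (RtoC (IZR (fst a)), RtoC (IZR (snd a))).

Definition wedge (k l : Z2) : R := IZR (fst k) * IZR (snd l) - IZR (snd k) * IZR (fst l).

(* From [Khat m = 2 pi i m^perp / |m|^2], paired with the gradient [2 pi i a] at
   [a = -(k + l)]. *)
Definition symbol (k l : Z2) : R := 2 * PI ^ 2 * wedge k l * (/ Z2norm2 l - / Z2norm2 k).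

Fixpoint coef (phi : tpoly) (a : Z2) : Defs.C :=
  match phi with
  | nil => C0
  | (b, c) :: phi' => if Z2eqb b a then Cadd c (coef phi' a) else coef phi' a
  end.

Lemma H_fun_cons a c phi p q :
  H_fun ((a, c) :: phi) p q =
  Cadd (Cmul (RtoC (1/2))
          (Csub (Cdot (K_diff (Z2sub p a) (Z2sub q Z2zero)) (grad_mode a c))
                (Cdot (K_diff (Z2sub p Z2zero) (Z2sub q a)) (grad_mode a c))))
       (H_fun phi p q).
Proof. unfold H_fun at 1; apply Cmul_Csub_Cadd. Qed.

Lemma H_fun_mode k l a c : k <> Z2zero -> l <> Z2zero ->
  Cmul (RtoC (1/2))
    (Csub (Cdot (K_diff (Z2sub (Z2opp k) a) (Z2sub (Z2opp l) Z2zero)) (grad_mode a c))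
          (Cdot (K_diff (Z2sub (Z2opp k) Z2zero) (Z2sub (Z2opp l) a)) (grad_mode a c)))
  = if Z2eqb a (Z2opp (Z2add k l)) then Cmul (RtoC (symbol k l)) c else C0.
Proof.
  intros Hk Hl.
  rewrite K_diff_shift_x, K_diff_shift_y.
  replace (Z2add (Z2opp k) (Z2opp l)) with (Z2opp (Z2add k l)) by Z2_solve.
  replace (Z2opp (Z2opp l)) with l by Z2_solve.
  destruct (Z2eqb_spec a (Z2opp (Z2add k l))) as [->|_]; [|C_solve; ring].
  pose proof (Z2norm2_pos k Hk); pose proof (Z2norm2_pos l Hl).
  rewrite (Khat_val l Hl), (Khat_val (Z2opp k) (Z2opp_neq0 k Hk)), Z2norm2_opp.
  unfold symbol, wedge, grad_mode, Z2opp, Z2add; cbn [fst snd]; rewrite ?opp_IZR, ?plus_IZR.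
  C_solve; field; lra.
Qed.

Lemma pairing_H_fun phi k l : k <> Z2zero -> l <> Z2zero ->
  pairing (H_fun phi) k l = Cmul (RtoC (symbol k l)) (coef phi (Z2opp (Z2add k l))).
Proof.
  intros Hk Hl; unfold pairing.
  induction phi as [|[a c] phi IH]; cbn [coef].
  - unfold H_fun, dot_mul, lift_x, lift_y, grad; cbn [map fold_right]; C_solve; ring.
  - rewrite H_fun_cons, H_fun_mode, IH by assumption.
    destruct (Z2eqb a (Z2opp (Z2add k l))).
    + symmetry; apply Cmul_Cadd_r.
    + apply Cadd_C0_l.
Qed.

Definition resonant (b k l : Z2) : R :=
  if Z2eqb b (Z2opp (Z2add k l)) then symbol k l ^ 2 else 0.

Lemma coef_two_modes_norm2 j c1 c2 a : Cnorm2 c1 <= 1/2 -> Cnorm2 c2 <= 1/2 ->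
  Cnorm2 (coef ((j, c1) :: (Z2opp j, c2) :: nil) a)
    <= (if Z2eqb j a then 1 else 0) + (if Z2eqb (Z2opp j) a then 1 else 0).
Proof.
  intros H1 H2; cbn [coef].
  destruct c1 as [x1 y1], c2 as [x2 y2]; unfold Cnorm2 in *; cbn [fst snd] in *.
  pose proof (pow2_ge_0 (x1 - x2)); pose proof (pow2_ge_0 (y1 - y2)).
  destruct (Z2eqb j a), (Z2eqb (Z2opp j) a); unfold Cadd, C0; cbn [fst snd]; nra.
Qed.

Lemma coef_e_fun_norm2 j a :
  Cnorm2 (coef (e_fun j) a)
    <= (if Z2eqb j a then 1 else 0) + (if Z2eqb (Z2opp j) a then 1 else 0).
Proof.
  assert (Hs : Cnorm2 (0, sqrt 2 / 2) <= 1/2 /\ Cnorm2 (0, - (sqrt 2 / 2)) <= 1/2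
               /\ Cnorm2 (RtoC (sqrt 2 / 2)) <= 1/2).
  { pose proof (pow2_sqrt 2 ltac:(lra)). unfold Cnorm2, RtoC; cbn [fst snd]; repeat split; nra. }
  unfold e_fun.
  destruct (Z2plusb j); [apply coef_two_modes_norm2; tauto|].
  destruct (Z2minusb j); [apply coef_two_modes_norm2; tauto|].
  cbn [coef]; unfold Cnorm2, C0; cbn [fst snd].
  destruct (Z2eqb j a), (Z2eqb (Z2opp j) a); nra.
Qed.

Lemma pairing_e_fun_norm2_le j k l : k <> Z2zero -> l <> Z2zero ->
  Cnorm2 (pairing (H_fun (e_fun j)) k l) <= resonant j k l + resonant (Z2opp j) k l.
Proof.
  intros Hk Hl.
  rewrite pairing_H_fun, Cnorm2_scale by assumption.
  pose proof (coef_e_fun_norm2 j (Z2opp (Z2add k l))) as Hc.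
  pose proof (pow2_ge_0 (symbol k l)).
  unfold resonant; destruct (Z2eqb j _), (Z2eqb (Z2opp j) _); nra.
Qed.

(** * Estimates of the symbol *)

Lemma symbol_comm k l : symbol l k = symbol k l.
Proof. unfold symbol, wedge; ring. Qed.

Lemma wedge_sq_le k l : wedge k l ^ 2 <= Z2norm2 k * Z2norm2 (Z2add k l).
Proof.
  destruct k as [k1 k2], l as [l1 l2]; unfold wedge, Z2norm2, Z2add; cbn [fst snd].
  rewrite !plus_IZR.
  assert (Lagrange : (IZR k1 ^ 2 + IZR k2 ^ 2) * ((IZR k1 + IZR l1) ^ 2 + (IZR k2 + IZR l2) ^ 2)
    = (IZR k1 * IZR l2 - IZR k2 * IZR l1) ^ 2
      + (IZR k1 * (IZR k1 + IZR l1) + IZR k2 * (IZR k2 + IZR l2)) ^ 2) by ring.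
  rewrite Lagrange.
  pose proof (pow2_ge_0 (IZR k1 * (IZR k1 + IZR l1) + IZR k2 * (IZR k2 + IZR l2))); lra.
Qed.

Lemma wedge_sq_le_r k l : wedge k l ^ 2 <= Z2norm2 l * Z2norm2 (Z2add k l).
Proof.
  replace (wedge k l) with (- wedge l k) by (unfold wedge; ring).
  replace (Z2add k l) with (Z2add l k) by Z2_solve.
  replace ((- wedge l k) ^ 2) with (wedge l k ^ 2) by ring.
  apply wedge_sq_le.
Qed.

Lemma symbol_sq_near k l : k <> Z2zero -> l <> Z2zero ->
  symbol k l ^ 2 <= 4 * PI ^ 4 * Z2norm2 (Z2add k l) * (/ Z2norm2 k + / Z2norm2 l).
Proof.
  intros Hk Hl.
  pose proof (Z2norm2_pos k Hk) as Hnk; pose proof (Z2norm2_pos l Hl) as Hnl.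
  pose proof (wedge_sq_le k l); pose proof (wedge_sq_le_r k l).
  set (s := Z2norm2 (Z2add k l)) in *; set (w := wedge k l) in *.
  assert (Ha : w ^ 2 * / Z2norm2 k <= s).
  { apply (Rmult_le_reg_r (Z2norm2 k)); [lra|].
    replace (w ^ 2 * / Z2norm2 k * Z2norm2 k) with (w ^ 2) by (field; lra). lra. }
  assert (Hb : w ^ 2 * / Z2norm2 l <= s).
  { apply (Rmult_le_reg_r (Z2norm2 l)); [lra|].
    replace (w ^ 2 * / Z2norm2 l * Z2norm2 l) with (w ^ 2) by (field; lra). lra. }
  pose proof (Rinv_0_lt_compat _ Hnk); pose proof (Rinv_0_lt_compat _ Hnl).
  pose proof (pow_lt PI 4 PI_RGT_0).
  unfold symbol; fold w.
  replace ((2 * PI ^ 2 * w * (/ Z2norm2 l - / Z2norm2 k)) ^ 2)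
    with (4 * PI ^ 4 * (w ^ 2 * (/ Z2norm2 l - / Z2norm2 k) ^ 2)) by ring.
  replace (4 * PI ^ 4 * s * (/ Z2norm2 k + / Z2norm2 l))
    with (4 * PI ^ 4 * (s * (/ Z2norm2 k + / Z2norm2 l))) by ring.
  apply Rmult_le_compat_l; [lra|].
  assert (w ^ 2 * (/ Z2norm2 l - / Z2norm2 k) ^ 2
          <= (w ^ 2 * / Z2norm2 k) * / Z2norm2 k + (w ^ 2 * / Z2norm2 l) * / Z2norm2 l).
  { assert (0 <= w ^ 2 * (/ Z2norm2 k * / Z2norm2 l))
      by (apply Rmult_le_pos; [apply pow2_ge_0 | nra]).
    nra. }
  nra.
Qed.

(* With [s = k + l] and [d = k.s]: [|k|^2 |s|^2 = d^2 + (k ^ l)^2] and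
   [|l|^2 = |s|^2 - 2d + |k|^2], so [|s| <= |k|/4] forces [|l|^2 >= |k|^2/2]. *)
Lemma symbol_sq_far k l : k <> Z2zero -> l <> Z2zero ->
  16 * Z2norm2 (Z2add k l) <= Z2norm2 k ->
  symbol k l ^ 2 * Z2norm2 k ^ 2 <= 144 * PI ^ 4 * Z2norm2 (Z2add k l) ^ 2.
Proof.
  intros Hk Hl Hfar.
  pose proof (Z2norm2_pos k Hk) as Hnk; pose proof (Z2norm2_pos l Hl) as Hnl.
  set (d := IZR (fst k) * IZR (fst (Z2add k l)) + IZR (snd k) * IZR (snd (Z2add k l))).
  assert (Hlag : Z2norm2 k * Z2norm2 (Z2add k l) = d ^ 2 + wedge k l ^ 2).
  { unfold d, wedge, Z2norm2, Z2add; cbn [fst snd]; rewrite !plus_IZR; ring. }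
  assert (Hl2 : Z2norm2 l = Z2norm2 (Z2add k l) - 2 * d + Z2norm2 k).
  { unfold d, Z2norm2, Z2add; cbn [fst snd]; rewrite !plus_IZR; ring. }
  set (nk := Z2norm2 k) in *; set (nl := Z2norm2 l) in *;
  set (s := Z2norm2 (Z2add k l)) in *; set (w := wedge k l) in *.
  assert (Hs : 0 <= s) by apply Z2norm2_ge0.
  pose proof (pow2_ge_0 w); pose proof (pow2_ge_0 d).
  assert (Hd : 2 * d <= nk / 2).
  { assert (nk * s <= nk * (nk / 16)) by (apply Rmult_le_compat_l; lra).
    assert (d ^ 2 <= (nk / 4) ^ 2) by nra.
    destruct (Rle_dec (2 * d) (nk / 2)); [assumption | nra]. }
  assert (Hnl2 : nk / 2 <= nl) by lra.
  assert (Hdiff : w ^ 2 * (nk - nl) ^ 2 <= 9 * nk ^ 2 * s ^ 2).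
  { assert ((nk - nl) ^ 2 <= 9 * nk * s).
    { rewrite Hl2.
      assert (16 * s ^ 2 <= nk * s) by nra.
      pose proof (pow2_ge_0 (2 * d + s)). nra. }
    assert (w ^ 2 <= nk * s) by lra.
    replace (9 * nk ^ 2 * s ^ 2) with ((nk * s) * (9 * nk * s)) by ring.
    apply Rmult_le_compat; first [apply pow2_ge_0 | assumption]. }
  replace (symbol k l ^ 2 * nk ^ 2) with (4 * PI ^ 4 * (w ^ 2 * (nk - nl) ^ 2) / nl ^ 2)
    by (unfold symbol; fold nk nl w; field; lra).
  pose proof (pow_lt PI 4 PI_RGT_0).
  apply (Rmult_le_reg_r (nl ^ 2)); [nra|].
  replace (4 * PI ^ 4 * (w ^ 2 * (nk - nl) ^ 2) / nl ^ 2 * nl ^ 2)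
    with (4 * PI ^ 4 * (w ^ 2 * (nk - nl) ^ 2)) by (field; lra).
  assert (nk ^ 2 <= 4 * nl ^ 2) by nra.
  assert (9 * nk ^ 2 * s ^ 2 <= 36 * s ^ 2 * nl ^ 2) by (pose proof (pow2_ge_0 s); nra).
  replace (144 * PI ^ 4 * s ^ 2 * nl ^ 2) with (4 * PI ^ 4 * (36 * s ^ 2 * nl ^ 2)) by ring.
  apply Rmult_le_compat_l; lra.
Qed.

(** * The decay weight in terms of sup-norms *)

Definition Z2supnorm (k : Z2) : nat := Nat.max (Z.abs_nat (fst k)) (Z.abs_nat (snd k)).

Definition decay (n t : nat) : R := Rmin (INR n ^ 2 / INR t ^ 2) (INR n ^ 4 / INR t ^ 4).

Lemma INR_Z_abs_nat z : INR (Z.abs_nat z) = Rabs (IZR z).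
Proof. rewrite INR_IZR_INZ, Nat2Z.inj_abs_nat, abs_IZR; reflexivity. Qed.

Lemma Z2supnorm_bounds k :
  INR (Z2supnorm k) ^ 2 <= Z2norm2 k <= 2 * INR (Z2supnorm k) ^ 2.
Proof.
  destruct k as [k1 k2]; unfold Z2supnorm, Z2norm2; cbn [fst snd].
  rewrite <- (pow2_abs (IZR k1)), <- (pow2_abs (IZR k2)).
  pose proof (Rabs_pos (IZR k1)); pose proof (Rabs_pos (IZR k2)).
  destruct (Nat.max_spec (Z.abs_nat k1) (Z.abs_nat k2)) as [[Hlt ->]|[Hle ->]].
  - apply lt_INR in Hlt; rewrite !INR_Z_abs_nat in *; split; nra.
  - apply le_INR in Hle; rewrite !INR_Z_abs_nat in *; split; nra.
Qed.

Lemma Z2supnorm_pos k : k <> Z2zero -> (1 <= Z2supnorm k)%nat.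
Proof.
  destruct k as [k1 k2]; unfold Z2supnorm, Z2zero; cbn [fst snd]; intros Hk.
  destruct (Z.eq_dec k1 0), (Z.eq_dec k2 0); subst; [contradiction | lia | lia | lia].
Qed.

(* [/ 0 = 0] in Stdlib, so the weight vanishes at the origin. *)
Lemma decay_0 n : decay n 0 = 0.
Proof.
  unfold decay, Rdiv; cbn [INR]; rewrite !pow_i, Rinv_0 by lia.
  rewrite !Rmult_0_r; apply Rmin_left, Rle_refl.
Qed.

Lemma decay_ratio n t : decay n t = Rmin ((INR n / INR t) ^ 2) ((INR n / INR t) ^ 4).
Proof. unfold decay, Rdiv; rewrite !Rpow_mult_distr, !pow_inv; reflexivity. Qed.

Lemma decay_ge0 n t : 0 <= decay n t.
Proof.
  rewrite decay_ratio; apply Rmin_glb; [apply pow2_ge_0|].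
  replace 4%nat with (2 * 2)%nat by reflexivity; rewrite pow_mult; apply pow2_ge_0.
Qed.

Lemma decay_far n t : (n <= t)%nat -> (1 <= t)%nat -> decay n t = (INR n / INR t) ^ 4.
Proof.
  intros Hnt Ht; rewrite decay_ratio.
  apply le_INR in Hnt; apply (le_INR 1) in Ht; cbn [INR] in Ht.
  assert (0 <= INR n / INR t <= 1).
  { split; [apply Rmult_le_pos; [apply pos_INR | left; apply Rinv_0_lt_compat; lra]|].
    apply (Rmult_le_reg_r (INR t)); [lra|].
    replace (INR n / INR t * INR t) with (INR n) by (field; lra); lra. }
  apply Rmin_right.
  replace ((INR n / INR t) ^ 4) with ((INR n / INR t) ^ 2 * (INR n / INR t) ^ 2) by ring.
  assert (0 <= (INR n / INR t) ^ 2 <= 1) by (split; nra).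
  nra.
Qed.

Lemma decay_near n t : (1 <= t)%nat -> (t <= 6 * n)%nat ->
  (INR n / INR t) ^ 2 <= 36 * decay n t.
Proof.
  intros Ht Hnt; rewrite decay_ratio.
  apply le_INR in Hnt; rewrite mult_INR in Hnt; apply (le_INR 1) in Ht; cbn [INR] in *.
  assert (1 <= 6 * (INR n / INR t)).
  { apply (Rmult_le_reg_r (INR t)); [lra|].
    replace (6 * (INR n / INR t) * INR t) with (6 * INR n) by (field; lra); lra. }
  set (x := INR n / INR t) in *.
  assert (1 <= 36 * x ^ 2) by nra.
  apply (Rmin_case _ _ (fun m => x ^ 2 <= 36 * m)).
  - pose proof (pow2_ge_0 x); lra.
  - replace (x ^ 4) with (x ^ 2 * x ^ 2) by ring. pose proof (pow2_ge_0 x); nra.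
Qed.

Lemma symbol_sq_le_decay_far n k l : k <> Z2zero -> l <> Z2zero ->
  Z2norm2 (Z2add k l) <= 2 * INR n ^ 2 -> (6 * n <= Z2supnorm k)%nat ->
  symbol k l ^ 2 <= 576 * PI ^ 4 * decay n (Z2supnorm k).
Proof.
  intros Hk Hl Hs Ht.
  pose proof (Z2supnorm_bounds k) as [Htk _].
  pose proof (Z2supnorm_pos k Hk) as Ht1.
  rewrite decay_far by lia.
  apply le_INR in Ht; apply (le_INR 1) in Ht1; rewrite mult_INR in Ht; cbn [INR] in *.
  pose proof (pos_INR n); pose proof (Z2norm2_ge0 (Z2add k l)).
  set (t := INR (Z2supnorm k)) in *.
  assert (Hfar : 16 * Z2norm2 (Z2add k l) <= Z2norm2 k) by nra.
  pose proof (symbol_sq_far k l Hk Hl Hfar).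
  pose proof (pow2_ge_0 (symbol k l)); pose proof (pow_lt PI 4 PI_RGT_0).
  apply (Rmult_le_reg_r (t ^ 4)); [apply pow_lt; lra|].
  replace (576 * PI ^ 4 * (INR n / t) ^ 4 * t ^ 4) with (144 * PI ^ 4 * (4 * INR n ^ 4))
    by (field; lra).
  assert (t ^ 4 <= Z2norm2 k ^ 2) by nra.
  assert (Z2norm2 (Z2add k l) ^ 2 <= 4 * INR n ^ 4) by nra.
  apply Rle_trans with (symbol k l ^ 2 * Z2norm2 k ^ 2); [apply Rmult_le_compat_l; lra|].
  apply Rle_trans with (144 * PI ^ 4 * Z2norm2 (Z2add k l) ^ 2); [assumption|].
  apply Rmult_le_compat_l; lra.
Qed.

Lemma div_norm2_le_decay n k s : k <> Z2zero -> (Z2supnorm k <= 6 * n)%nat ->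
  0 <= s <= 2 * INR n ^ 2 -> s / Z2norm2 k <= 72 * decay n (Z2supnorm k).
Proof.
  intros Hk Ht Hs.
  pose proof (Z2supnorm_bounds k) as [Htk _].
  pose proof (Z2supnorm_pos k Hk) as Ht1.
  pose proof (decay_near n _ Ht1 Ht).
  apply (le_INR 1) in Ht1; cbn [INR] in Ht1.
  set (t := INR (Z2supnorm k)) in *.
  assert (s / Z2norm2 k <= 2 * (INR n / t) ^ 2).
  { apply (Rmult_le_reg_r (Z2norm2 k)); [nra|].
    replace (s / Z2norm2 k * Z2norm2 k) with s by (field; nra).
    replace (2 * (INR n / t) ^ 2 * Z2norm2 k) with (2 * INR n ^ 2 * (Z2norm2 k / t ^ 2))
      by (field; lra).
    assert (1 <= Z2norm2 k / t ^ 2).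
    { apply (Rmult_le_reg_r (t ^ 2)); [nra|].
      replace (Z2norm2 k / t ^ 2 * t ^ 2) with (Z2norm2 k) by (field; lra). lra. }
    pose proof (pow2_ge_0 (INR n)); nra. }
  lra.
Qed.

Lemma symbol_sq_le_decay_near n k l : k <> Z2zero -> l <> Z2zero ->
  Z2norm2 (Z2add k l) <= 2 * INR n ^ 2 ->
  (Z2supnorm k <= 6 * n)%nat -> (Z2supnorm l <= 6 * n)%nat ->
  symbol k l ^ 2 <= 288 * PI ^ 4 * (decay n (Z2supnorm k) + decay n (Z2supnorm l)).
Proof.
  intros Hk Hl Hs Htk Htl.
  pose proof (Z2norm2_ge0 (Z2add k l)) as Hs0.
  pose proof (div_norm2_le_decay n k _ Hk Htk (conj Hs0 Hs)).
  pose proof (div_norm2_le_decay n l _ Hl Htl (conj Hs0 Hs)).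
  pose proof (pow_lt PI 4 PI_RGT_0).
  eapply Rle_trans; [apply symbol_sq_near; assumption|].
  unfold Rdiv in *; nra.
Qed.

Lemma symbol_sq_le_decay n k l : k <> Z2zero -> l <> Z2zero ->
  Z2norm2 (Z2add k l) <= 2 * INR n ^ 2 ->
  symbol k l ^ 2 <= 576 * PI ^ 4 * (decay n (Z2supnorm k) + decay n (Z2supnorm l)).
Proof.
  intros Hk Hl Hs.
  pose proof (decay_ge0 n (Z2supnorm k)); pose proof (decay_ge0 n (Z2supnorm l)).
  pose proof (pow_lt PI 4 PI_RGT_0).
  destruct (le_lt_dec (6 * n) (Z2supnorm k)) as [Hfar_k|Hnear_k].
  - pose proof (symbol_sq_le_decay_far n k l Hk Hl Hs Hfar_k); nra.
  - destruct (le_lt_dec (6 * n) (Z2supnorm l)) as [Hfar_l|Hnear_l].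
    + rewrite <- symbol_comm.
      replace (Z2add k l) with (Z2add l k) in Hs by Z2_solve.
      pose proof (symbol_sq_le_decay_far n l k Hl Hk Hs Hfar_l); nra.
    + pose proof (symbol_sq_le_decay_near n k l Hk Hl Hs ltac:(lia) ltac:(lia)); nra.
Qed.

(** * Lattice sums *)

Definition lsum {A} (f : A -> R) (L : list A) : R := fold_right (fun a acc => f a + acc) 0 L.

Section ListSums.
Context {A : Type}.
Implicit Types (f g : A -> R) (L : list A).

Lemma lsum_cons f a L : lsum f (a :: L) = f a + lsum f L.
Proof. reflexivity. Qed.

Lemma lsum_app f L1 L2 : lsum f (L1 ++ L2) = lsum f L1 + lsum f L2.
Proof. unfold lsum; induction L1 as [|a L1 IH]; cbn; [ring | rewrite IH; ring]. Qed.

Lemma lsum_map {B} f (h : B -> A) (L : list B) : lsum f (map h L) = lsum (fun x => f (h x)) L.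
Proof. unfold lsum; induction L as [|a L IH]; cbn; [ring | rewrite IH; ring]. Qed.

Lemma lsum_ext_in f g L : (forall x, In x L -> f x = g x) -> lsum f L = lsum g L.
Proof.
  unfold lsum; induction L as [|a L IH]; intros H; cbn; [reflexivity|].
  rewrite (H a (or_introl eq_refl)), IH; [reflexivity|].
  intros x Hx; apply H, in_cons, Hx.
Qed.

Lemma lsum_le f g L : (forall x, In x L -> f x <= g x) -> lsum f L <= lsum g L.
Proof.
  unfold lsum; induction L as [|a L IH]; intros H; cbn; [lra|].
  pose proof (H a (or_introl eq_refl)); pose proof (IH (fun x Hx => H x (or_intror Hx))); lra.
Qed.

Lemma lsum_nonneg f L : (forall x, In x L -> 0 <= f x) -> 0 <= lsum f L.
Proof.
  unfold lsum; induction L as [|a L IH]; intros H; cbn; [lra|].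
  pose proof (H a (or_introl eq_refl)); pose proof (IH (fun x Hx => H x (or_intror Hx))); lra.
Qed.

Lemma lsum_plus f g L : lsum (fun x => f x + g x) L = lsum f L + lsum g L.
Proof. unfold lsum; induction L as [|a L IH]; cbn; [ring | rewrite IH; ring]. Qed.

Lemma lsum_scal c f L : lsum (fun x => c * f x) L = c * lsum f L.
Proof. unfold lsum; induction L as [|a L IH]; cbn; [ring | rewrite IH; ring]. Qed.

Lemma lsum_const c L : lsum (fun _ => c) L = INR (length L) * c.
Proof.
  unfold lsum; induction L as [|a L IH]; cbn [fold_right length];
    [cbn; ring | rewrite IH, S_INR; ring].
Qed.

Lemma lsum_filter (P : A -> bool) f L :
  lsum (fun x => if P x then f x else 0) L = lsum f (filter P L).
Proof.
  unfold lsum; induction L as [|a L IH]; cbn; [reflexivity|].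
  destruct (P a); cbn; rewrite IH; ring.
Qed.

Lemma lsum_incl f L B : NoDup L -> NoDup B -> incl L B ->
  (forall x, In x B -> 0 <= f x) -> lsum f L <= lsum f B.
Proof.
  revert B; induction L as [|a L IH]; intros B HL HB Hincl Hf; [apply lsum_nonneg; assumption|].
  destruct (in_split a B (Hincl a (or_introl eq_refl))) as [B1 [B2 ->]].
  inversion HL as [|? ? HaL HL']; subst.
  assert (lsum f L <= lsum f (B1 ++ B2)).
  { apply IH; [assumption | eapply NoDup_remove_1; eassumption | |].
    - intros x Hx; specialize (Hincl x (or_intror Hx)).
      apply in_app_or in Hincl; apply in_or_app.
      destruct Hincl as [|[->|]]; [auto | contradiction | auto].
    - intros x Hx; apply Hf; apply in_app_or in Hx; apply in_or_app; cbn; tauto. }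
  rewrite lsum_app, !lsum_cons in *; lra.
Qed.

End ListSums.

Lemma lsum_prod {A B} (F : A * B -> R) (L : list A) (L' : list B) :
  lsum F (list_prod L L') = lsum (fun x => lsum (fun y => F (x, y)) L') L.
Proof.
  induction L as [|a L IH]; [reflexivity|].
  cbn [list_prod]; rewrite lsum_app, lsum_map, IH; reflexivity.
Qed.

Lemma NoDup_list_prod {A B} (L : list A) (L' : list B) :
  NoDup L -> NoDup L' -> NoDup (list_prod L L').
Proof.
  induction L as [|a L IH]; intros HL HL'; cbn; [constructor|].
  inversion HL as [|? ? HaL HL0]; subst.
  apply NoDup_app; auto.
  - apply NoDup_map_NoDup_ForallPairs; [|assumption].
    intros x y _ _ E; injection E; auto.
  - intros x Hx Hx'; apply in_map_iff in Hx as [y [<- _]].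
    apply in_prod_iff in Hx'; tauto.
Qed.

Fixpoint zrange (M : nat) : list Z :=
  match M with
  | O => 0%Z :: nil
  | S M' => Z.of_nat M :: (- Z.of_nat M)%Z :: zrange M'
  end.

Lemma zrange_In M x : In x (zrange M) <-> (Z.abs x <= Z.of_nat M)%Z.
Proof.
  induction M as [|M IH]; cbn [zrange In]; [split; [intros [<-|[]]; reflexivity | left; lia]|].
  rewrite IH; split; [intros [<-|[<-|H]]; lia|].
  intros H; destruct (Z.eq_dec (Z.of_nat (S M)) x) as [|Hx1]; [left; assumption|right].
  destruct (Z.eq_dec (- Z.of_nat (S M)) x) as [|Hx2]; [left; assumption|right; lia].
Qed.

Lemma zrange_NoDup M : NoDup (zrange M).
Proof.
  induction M as [|M IH]; cbn [zrange]; [constructor; [intros []|constructor]|].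
  constructor; [|constructor; [|assumption]].
  - intros [H|H]; [lia|]; apply zrange_In in H; lia.
  - intros H; apply zrange_In in H; lia.
Qed.

Lemma length_zrange M : length (zrange M) = (2 * M + 1)%nat.
Proof. induction M as [|M IH]; cbn [zrange length]; [reflexivity | rewrite IH; lia]. Qed.

(* The square [-(M+1), M+1]^2 adds a shell of [8(M+1)] points of sup-norm [M+1]. *)
Lemma lsum_box_supnorm (f : nat -> R) M :
  lsum (fun x => lsum (fun y => f (Z2supnorm (x, y))) (zrange M)) (zrange M)
  = f 0%nat + lsum (fun t => 8 * INR t * f t) (seq 1 M).
Proof.
  induction M as [|M IH]; [cbn; ring|].
  set (m := Z.of_nat (S M)).
  assert (Hedge : forall x, In x (zrange (S M)) ->
            Z2supnorm (x, m) = S M /\ Z2supnorm (x, (- m)%Z) = S M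
            /\ Z2supnorm (m, x) = S M /\ Z2supnorm ((- m)%Z, x) = S M).
  { intros x Hx; apply zrange_In in Hx; unfold Z2supnorm, m; cbn [fst snd]; lia. }
  assert (Hrange : forall y, In y (zrange M) -> In y (zrange (S M)))
    by (intros; right; right; auto).
  rewrite seq_S, lsum_app, lsum_cons; cbn [lsum fold_right Nat.add].
  rewrite (lsum_ext_in _ (fun x => f (S M) + f (S M)
             + lsum (fun y => f (Z2supnorm (x, y))) (zrange M))).
  2:{ intros x Hx; destruct (Hedge x Hx) as (E1 & E2 & _).
      change (zrange (S M)) with (m :: (- m)%Z :: zrange M).
      rewrite !lsum_cons, E1, E2; ring. }
  rewrite lsum_plus, lsum_const.
  change (zrange (S M)) with (m :: (- m)%Z :: zrange M) at 2.
  rewrite !lsum_cons, IH.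
  rewrite (lsum_ext_in (fun y => f (Z2supnorm (m, y))) (fun _ => f (S M))),
          (lsum_ext_in (fun y => f (Z2supnorm ((- m)%Z, y))) (fun _ => f (S M)))
    by (intros y Hy; destruct (Hedge y (Hrange y Hy)) as (_ & _ & E3 & E4);
        rewrite ?E3, ?E4; reflexivity).
  rewrite !lsum_const, !length_zrange.
  rewrite !plus_INR, !mult_INR, !S_INR, INR_0; ring.
Qed.

Lemma lsum_seq_telescope (a Phi : nat -> R) M :
  (forall t, (1 <= t <= M)%nat -> a t <= Phi t - Phi (t - 1)%nat) ->
  lsum a (seq 1 M) <= Phi M - Phi 0%nat.
Proof.
  induction M as [|M IH]; intros H; [cbn; lra|].
  rewrite seq_S, lsum_app, lsum_cons; cbn [lsum fold_right Nat.add].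
  pose proof (IH (fun t Ht => H t ltac:(lia))); pose proof (H (S M) ltac:(lia)).
  replace (S M - 1)%nat with M in * by lia; lra.
Qed.

Lemma ln_le a b : 0 < a -> a <= b -> ln a <= ln b.
Proof. intros Ha [Hab| ->]; [left; apply ln_increasing|]; lra. Qed.

Lemma ln_le_sub_1 x : 0 < x -> ln x <= x - 1.
Proof. intros Hx; pose proof (exp_ineq1_le (ln x)); rewrite exp_ln in *; lra. Qed.

Lemma harmonic_step x : 2 <= x -> / x <= ln x - ln (x - 1).
Proof.
  intros Hx.
  pose proof (ln_le_sub_1 ((x - 1) / x) ltac:(apply Rdiv_lt_0_compat; lra)) as Hln.
  unfold Rdiv in Hln; rewrite ln_mult, ln_Rinv in Hln by (try apply Rinv_0_lt_compat; lra).
  replace ((x - 1) * / x - 1) with (- / x) in Hln by (field; lra); lra.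
Qed.

Lemma cube_step x : 2 <= x -> / x ^ 3 <= / (x - 1) ^ 2 - / x ^ 2.
Proof.
  intros Hx.
  assert (E : / (x - 1) ^ 2 - / x ^ 2 - / x ^ 3 = (x ^ 2 + x - 1) / (x ^ 3 * (x - 1) ^ 2))
    by (field; lra).
  enough (0 <= (x ^ 2 + x - 1) / (x ^ 3 * (x - 1) ^ 2)) by lra.
  unfold Rdiv; apply Rmult_le_pos; [nra|].
  left; apply Rinv_0_lt_compat, Rmult_lt_0_compat; apply pow_lt; lra.
Qed.

(* Potential whose increments dominate [t * decay n t]: harmonic growth [n^2 (1 + ln t)]
   up to [t = n], then the convergent tail [n^4 / t^2]. *)
Definition shell_potential (n t : nat) : R :=
  if Nat.eqb t 0 then 0
  else if Nat.leb t n then INR n ^ 2 * (1 + ln (INR t))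
  else INR n ^ 2 * (2 + ln (INR n)) - INR n ^ 4 / INR t ^ 2.

Lemma shell_potential_tail n t : (1 <= n <= t)%nat ->
  shell_potential n t = INR n ^ 2 * (2 + ln (INR n)) - INR n ^ 4 / INR t ^ 2.
Proof.
  intros Ht; unfold shell_potential.
  replace (Nat.eqb t 0) with false by (symmetry; apply Nat.eqb_neq; lia).
  destruct (Nat.leb_spec t n); [|reflexivity].
  replace t with n by lia.
  assert (0 < INR n) by (apply lt_0_INR; lia).
  field; lra.
Qed.

Lemma shell_potential_step n t : (1 <= n)%nat -> (1 <= t)%nat ->
  INR t * decay n t <= shell_potential n t - shell_potential n (t - 1).
Proof.
  intros Hn Ht.
  assert (Hn' : 1 <= INR n) by (apply (le_INR 1); exact Hn).
  assert (Ht' : 1 <= INR t) by (apply (le_INR 1); exact Ht).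
  assert (HI : INR (t - 1) = INR t - 1) by (rewrite minus_INR by lia; reflexivity).
  pose proof (Rmin_l ((INR n / INR t) ^ 2) ((INR n / INR t) ^ 4)).
  pose proof (Rmin_r ((INR n / INR t) ^ 2) ((INR n / INR t) ^ 4)).
  rewrite <- decay_ratio in *.
  destruct (le_lt_dec t n) as [Htn|Hnt].
  - assert (INR t * decay n t <= INR n ^ 2 * / INR t).
    { replace (INR n ^ 2 * / INR t) with (INR t * (INR n / INR t) ^ 2) by (field; lra).
      apply Rmult_le_compat_l; lra. }
    unfold shell_potential.
    replace (Nat.eqb t 0) with false by (symmetry; apply Nat.eqb_neq; lia).
    replace (Nat.leb t n) with true by (symmetry; apply Nat.leb_le; lia).
    destruct (Nat.eqb_spec (t - 1) 0) as [Ht1|Ht1].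
    + replace t with 1%nat in * by lia; cbn [INR] in *; rewrite ln_1; lra.
    + replace (Nat.leb (t - 1) n) with true by (symmetry; apply Nat.leb_le; lia).
      pose proof (harmonic_step (INR t) ltac:(apply (le_INR 2); lia)).
      assert (INR n ^ 2 * / INR t <= INR n ^ 2 * (ln (INR t) - ln (INR t - 1)))
        by (apply Rmult_le_compat_l; [nra | lra]).
      rewrite HI; lra.
  - assert (INR t * decay n t <= INR n ^ 4 * / INR t ^ 3).
    { replace (INR n ^ 4 * / INR t ^ 3) with (INR t * (INR n / INR t) ^ 4) by (field; lra).
      apply Rmult_le_compat_l; lra. }
    rewrite !shell_potential_tail, HI by lia.
    pose proof (cube_step (INR t) ltac:(apply (le_INR 2); lia)).
    assert (INR n ^ 4 * / INR t ^ 3 <= INR n ^ 4 * (/ (INR t - 1) ^ 2 - / INR t ^ 2))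
      by (apply Rmult_le_compat_l; [nra | lra]).
    unfold Rdiv; lra.
Qed.

Lemma shell_potential_le n t : (1 <= n)%nat ->
  shell_potential n t <= INR n ^ 2 * (2 + ln (INR n)).
Proof.
  intros Hn.
  assert (Hn' : 1 <= INR n) by (apply (le_INR 1); exact Hn).
  assert (0 <= ln (INR n)) by (rewrite <- ln_1; apply ln_le; lra).
  destruct (le_lt_dec n t) as [Hnt|Htn].
  - rewrite shell_potential_tail by lia.
    assert (0 <= INR n ^ 4 / INR t ^ 2).
    { unfold Rdiv; apply Rmult_le_pos; [nra|].
      left; apply Rinv_0_lt_compat, pow_lt, lt_0_INR; lia. }
    lra.
  - unfold shell_potential.
    destruct (Nat.eqb_spec t 0); [nra|].
    replace (Nat.leb t n) with true by (symmetry; apply Nat.leb_le; lia).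
    assert (ln (INR t) <= ln (INR n)) by (apply ln_le; [apply lt_0_INR | apply le_INR]; lia).
    nra.
Qed.

Lemma lsum_shell_decay n M : (1 <= n)%nat ->
  lsum (fun t => INR t * decay n t) (seq 1 M) <= INR n ^ 2 * (2 + ln (INR n)).
Proof.
  intros Hn.
  eapply Rle_trans.
  - apply (lsum_seq_telescope _ (shell_potential n)).
    intros t Ht; apply shell_potential_step; lia.
  - pose proof (shell_potential_le n M Hn).
    change (shell_potential n 0) with 0; lra.
Qed.

Lemma lsum_decay_supnorm_le n L : (1 <= n)%nat -> NoDup L ->
  lsum (fun k => decay n (Z2supnorm k)) L <= 8 * INR n ^ 2 * (2 + ln (INR n)).
Proof.
  intros Hn HL.
  set (M := list_max (map Z2supnorm L)).
  assert (HM : forall k, In k L -> (Z2supnorm k <= M)%nat).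
  { intros k Hk.
    pose proof (proj1 (list_max_le (map Z2supnorm L) M) (le_n M)) as Hmax.
    rewrite Forall_forall in Hmax; apply Hmax, in_map, Hk. }
  eapply Rle_trans.
  - apply (lsum_incl _ L (list_prod (zrange M) (zrange M)));
      [assumption | apply NoDup_list_prod; apply zrange_NoDup | |].
    + intros [x y] Hk; apply in_prod_iff; specialize (HM _ Hk).
      unfold Z2supnorm in HM; cbn [fst snd] in HM; split; apply zrange_In; lia.
    + intros; apply decay_ge0.
  - rewrite (lsum_prod (A := Z) (B := Z) (fun k => decay n (Z2supnorm k))); cbv beta.
    rewrite lsum_box_supnorm, decay_0, Rplus_0_l.
    rewrite (lsum_ext_in _ (fun t => 8 * (INR t * decay n t))) by (intros; ring).
    rewrite lsum_scal; pose proof (lsum_shell_decay n M Hn); lra.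
Qed.

Lemma resonant_sum_le n b S : (1 <= n)%nat -> Z2norm2 b <= 2 * INR n ^ 2 -> NoDup S ->
  (forall kl, In kl S -> fst kl <> Z2zero /\ snd kl <> Z2zero) ->
  lsum (fun kl => resonant b (fst kl) (snd kl)) S
    <= 9216 * PI ^ 4 * INR n ^ 2 * (2 + ln (INR n)).
Proof.
  intros Hn Hb HS Hnz.
  set (P := fun kl : Z2 * Z2 => Z2eqb b (Z2opp (Z2add (fst kl) (snd kl)))).
  set (F := filter P S).
  assert (HF : forall k l, In (k, l) F -> Z2add k l = Z2opp b /\ k <> Z2zero /\ l <> Z2zero).
  { intros k l Hkl; apply filter_In in Hkl as [Hin HP]; unfold P in HP; cbn [fst snd] in HP.
    destruct (Z2eqb_spec b (Z2opp (Z2add k l))) as [->|]; [|discriminate].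
    split; [Z2_solve | apply (Hnz _ Hin)]. }
  assert (HnodupF : NoDup F) by apply NoDup_filter, HS.
  unfold resonant; rewrite (lsum_filter P (fun kl => symbol (fst kl) (snd kl) ^ 2)); fold F.
  eapply Rle_trans.
  { apply (lsum_le _ (fun kl => 576 * PI ^ 4
             * (decay n (Z2supnorm (fst kl)) + decay n (Z2supnorm (snd kl))))).
    intros [k l] Hkl; destruct (HF k l Hkl) as (Hsum & Hk & Hl).
    apply symbol_sq_le_decay; [assumption | assumption|].
    cbn [fst snd]; rewrite Hsum, Z2norm2_opp; assumption. }
  rewrite lsum_scal, lsum_plus.
  rewrite <- (lsum_map (fun k => decay n (Z2supnorm k)) fst),
          <- (lsum_map (fun k => decay n (Z2supnorm k)) snd).
  assert (Hfst : NoDup (map fst F)).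
  { apply NoDup_map_NoDup_ForallPairs; [|assumption].
    intros [k l] [k' l'] Hx Hy E; cbn in E; subst k'.
    destruct (HF k l Hx) as [E1 _], (HF k l' Hy) as [E2 _]; rewrite <- E2 in E1.
    f_equal; Z2_solve. }
  assert (Hsnd : NoDup (map snd F)).
  { apply NoDup_map_NoDup_ForallPairs; [|assumption].
    intros [k l] [k' l'] Hx Hy E; cbn in E; subst l'.
    destruct (HF k l Hx) as [E1 _], (HF k' l Hy) as [E2 _]; rewrite <- E2 in E1.
    f_equal; Z2_solve. }
  pose proof (lsum_decay_supnorm_le n _ Hn Hfst); pose proof (lsum_decay_supnorm_le n _ Hn Hsnd).
  pose proof (pow_lt PI 4 PI_RGT_0).
  replace (9216 * PI ^ 4 * INR n ^ 2 * (2 + ln (INR n)))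
    with (576 * PI ^ 4 * (8 * INR n ^ 2 * (2 + ln (INR n)) + 8 * INR n ^ 2 * (2 + ln (INR n))))
    by ring.
  apply Rmult_le_compat_l; lra.
Qed.

Lemma sq_two_add_ln_le x J : 1 <= x -> x <= J -> 2 <= J ->
  x ^ 2 * (2 + ln x) <= 5 * J ^ 2 * ln J.
Proof.
  intros Hx HxJ HJ.
  pose proof ln_lt_2.
  assert (0 <= ln x) by (rewrite <- ln_1; apply ln_le; lra).
  assert (ln x <= ln J) by (apply ln_le; lra).
  assert (ln 2 <= ln J) by (apply ln_le; lra).
  assert (x ^ 2 <= J ^ 2) by (apply pow_incr; lra).
  assert (2 + ln x <= 5 * ln J) by lra.
  replace (5 * J ^ 2 * ln J) with (J ^ 2 * (5 * ln J)) by ring.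
  apply Rmult_le_compat; [nra | lra | assumption | assumption].
Qed.

Lemma partial_sum_e_fun_le j S :
  (forall kl, In kl S -> fst kl <> Z2zero /\ snd kl <> Z2zero) ->
  partial_sum (H_fun (e_fun j)) S
    <= lsum (fun kl => resonant j (fst kl) (snd kl)) S
       + lsum (fun kl => resonant (Z2opp j) (fst kl) (snd kl)) S.
Proof.
  intros Hnz.
  change (partial_sum ?H S) with (lsum (fun kl => Cnorm2 (pairing H (fst kl) (snd kl))) S).
  rewrite <- lsum_plus; apply lsum_le.
  intros kl Hkl; apply pairing_e_fun_norm2_le; apply Hnz, Hkl.
Qed.

Theorem mainTheorem15 :
  exists Cst : R, 0 < Cst /\
    forall j : Z2, 2 <= Z2norm j ->
    forall S : list (Z2 * Z2), NoDup S ->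
      (forall kl, In kl S -> fst kl <> Z2zero /\ snd kl <> Z2zero) ->
      partial_sum (H_fun (e_fun j)) S <= Cst * Z2norm j ^ 2 * ln (Z2norm j).
Proof.
  pose proof (pow_lt PI 4 PI_RGT_0) as Hpi.
  exists (92160 * PI ^ 4); split; [lra|].
  intros j Hj S HS Hnz.
  set (n := Z2supnorm j).
  pose proof (Z2supnorm_bounds j) as [Hn_lo Hn_hi]; fold n in Hn_lo, Hn_hi.
  assert (HJ : Z2norm j ^ 2 = Z2norm2 j) by apply pow2_sqrt, Z2norm2_ge0.
  assert (Hn : (1 <= n)%nat).
  { apply Z2supnorm_pos; intros ->.
    unfold Z2norm, Z2norm2 in Hj; cbn in Hj; rewrite Rmult_0_l, Rplus_0_l, sqrt_0 in Hj; lra. }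
  assert (HnJ : INR n <= Z2norm j) by (pose proof (pos_INR n); nra).
  pose proof (partial_sum_e_fun_le j S Hnz).
  pose proof (resonant_sum_le n j S Hn ltac:(lra) HS Hnz).
  pose proof (resonant_sum_le n (Z2opp j) S Hn ltac:(rewrite Z2norm2_opp; lra) HS Hnz).
  pose proof (sq_two_add_ln_le (INR n) (Z2norm j) (le_INR 1 n Hn) HnJ Hj).
  replace (92160 * PI ^ 4 * Z2norm j ^ 2 * ln (Z2norm j))
    with (18432 * PI ^ 4 * (5 * Z2norm j ^ 2 * ln (Z2norm j))) by ring.
  nra.
Qed.
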